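(* Let $\psi$ be an injective map from the positive integers to the positive integers and let $A=\{\psi(n): n\ge 1\}$. For every nonnegative integer $n$, \[ \bar{p}^{A}_{1}(n)=\sum_{(N_0,N_1,N_2,\dots)}\ \prod_{j\ge0}\bar{p}^{A}(N_j), \] where the sum runs over all sequences $(N_0,N_1,\dots)$ of nonnegative integers with $n=\sum_{i\ge0}2^{i}N_i$.
   Context: For a set $A$ of positive integers: $\bar{p}^{A}(n)=E^{A}(n)-O^{A}(n)$, where $E^{A}(n)$ (resp. $O^{A}(n)$) is the number of partitions of $n$ into parts from $A$ (no restriction on multiplicities) with an even (resp. odd) number of parts, and $\bar{p}^{A}(0)=1$. For a positive integer $\alpha$, $\bar{p}^{A}_{\alpha}(n)=E^{A}_{\alpha}(n)-O^{A}_{\alpha}(n)$, where $E^{A}_{\alpha}(n)$ (resp. $O^{A}_{\alpha}(n)$) is the number of partitions of $n$ into parts from $A$ in which each part occurs at most $\alpha$ times and having an even (resp. odd) number of parts, and $\bar{p}^{A}_{\alpha}(0)=1$. *)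

From mathcomp Require Import all_boot all_order all_algebra.
Set Implicit Arguments. Unset Strict Implicit. Unset Printing Implicit Defensive.
Import GRing.Theory Num.Theory.

(* A partition of n is encoded by its multiplicity function
   m : 'I_n.+1 -> 'I_n.+1, where m k is the number of times the part k occurs
   (parts are between 1 and n, each occurring at most n times). *)

Definition is_partA (A : pred nat) (n : nat) (m : {ffun 'I_n.+1 -> 'I_n.+1}) : bool :=
  ((\sum_(k < n.+1) k * m k)%N == n) &&
  [forall k : 'I_n.+1, (m k != 0 :> nat) ==> ((0 < k)%N && A k)].

Definition num_parts (n : nat) (m : {ffun 'I_n.+1 -> 'I_n.+1}) : nat :=
  (\sum_(k < n.+1) m k)%N.

Definition EA (A : pred nat) (n : nat) : nat :=
  #|[set m : {ffun 'I_n.+1 -> 'I_n.+1} | is_partA A m && ~~ odd (num_parts m)]|.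
Definition OA (A : pred nat) (n : nat) : nat :=
  #|[set m : {ffun 'I_n.+1 -> 'I_n.+1} | is_partA A m && odd (num_parts m)]|.

Definition pbar (A : pred nat) (n : nat) : int := (EA A n)%:Z - (OA A n)%:Z.

Definition EA_alpha (A : pred nat) (alpha n : nat) : nat :=
  #|[set m : {ffun 'I_n.+1 -> 'I_n.+1} |
      [&& is_partA A m, [forall k, (m k <= alpha)%N] & ~~ odd (num_parts m)]]|.
Definition OA_alpha (A : pred nat) (alpha n : nat) : nat :=
  #|[set m : {ffun 'I_n.+1 -> 'I_n.+1} |
      [&& is_partA A m, [forall k, (m k <= alpha)%N] & odd (num_parts m)]]|.

Definition pbar_alpha (A : pred nat) (alpha n : nat) : int :=
  (EA_alpha A alpha n)%:Z - (OA_alpha A alpha n)%:Z.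

From mathcomp Require Import all_boot all_order all_algebra.
Set Implicit Arguments. Unset Strict Implicit. Unset Printing Implicit Defensive.
Import GRing.Theory Num.Theory.
Local Open Scope ring_scope.

(* Counted with the sign (-1)^(number of parts), partitions into parts from A
   have generating function prod_(a in A) 1/(1 + q^a), and those with
   multiplicities at most 1 have prod_(a in A) (1 - q^a).  Since
   (1 - x) prod_(j < m) (1 + x^(2^j)) = 1 - x^(2^m), the factor 1 - q^a is
   prod_(j >= 0) 1/(1 + q^(a 2^j)); hence
   sum_n pbar^A_1(n) q^n = prod_(j >= 0) (sum_N pbar^A(N) q^(2^j N)),
   and comparing coefficients of q^n gives the identity.  Power series are
   represented by integer polynomials compared modulo q^(n+1). *)

Lemma sumr_sign_card (T : finType) (P : pred T) (g : T -> nat) :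
  \sum_(x | P x) (-1) ^+ g x =
  #|[set x | P x && ~~ odd (g x)]|%:Z - #|[set x | P x && odd (g x)]|%:Z :> int.
Proof.
have card_sum (C : pred T) : #|[set x | C x]|%:Z = \sum_(x | C x) 1.
  by rewrite -sum1dep_card -natz natr_sum; apply: eq_bigr.
rewrite (bigID (odd \o g)) /= addrC !card_sum -sumrN.
congr (_ + _); apply: eq_bigr => x /andP[_ gx]; rewrite -signr_odd.
- by rewrite (negbTE gx).
- by rewrite gx.
Qed.

Lemma coef_prod_sumXn (R : comNzRingType) (I J : finType)
    (c : I -> J -> R) (w : I -> J -> nat) N :
  (\prod_i \sum_j c i j *: 'X^(w i j))`_N =
  \sum_(f : {ffun I -> J} | (\sum_i w i (f i))%N == N) \prod_i c i (f i).
Proof.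
rewrite bigA_distr_bigA /= coef_sum [RHS]big_mkcond /=; apply: eq_bigr => f _.
have -> : \prod_i (c i (f i) *: 'X^(w i (f i)))
        = (\prod_i c i (f i)) *: 'X^(\sum_i w i (f i)) :> {poly R}.
  rewrite -prodrXr -mul_polyC rmorph_prod -big_split /=.
  by apply: eq_bigr => i _; rewrite mul_polyC.
by rewrite coefZ coefXn eq_sym; case: eqP; rewrite ?mulr1 ?mulr0.
Qed.

Lemma prodr_bool (R : comPzSemiRingType) (I : finType) (b : pred I) :
  \prod_i (b i)%:R = [forall i, b i]%:R :> R.
Proof.
have [b_all|/forallPn[i /negbTE bi]] := boolP [forall i, b i].
  by rewrite big1 // => i _; rewrite (forallP b_all).
by rewrite (bigD1 i) //= bi mul0r.
Qed.

Lemma forall_andb (I : finType) (a b : pred I) :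
  [forall i, a i && b i] = [forall i, a i] && [forall i, b i].
Proof.
apply/forallP/andP => [ab|[/forallP a_all /forallP b_all] i].
  by split; apply/forallP => i; case/andP: (ab i).
by rewrite a_all b_all.
Qed.

Notation "p = q %[modX m ]" := (take_poly m p = take_poly m q)
  (at level 70, q at next level, format "p  =  q  %[modX  m ]") : ring_scope.

Section TruncatedPolynomials.

Variable R : nzRingType.
Implicit Types p q : {poly R}.

Lemma eqmodXP m p q :
  (forall i, (i < m)%N -> p`_i = q`_i) <-> p = q %[modX m].
Proof.
split=> [pq|pq i lt_im].
  by apply/polyP => i; rewrite !coef_take_poly; case: ifP => // /pq.
by have := congr1 (coefp i) pq; rewrite /= !coef_take_poly lt_im.
Qed.

Lemma coef_eqmodX m p q i : p = q %[modX m] -> (i < m)%N -> p`_i = q`_i.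
Proof. by move/eqmodXP; apply. Qed.

Lemma eqmodX_mul m p p' q q' :
  p = p' %[modX m] -> q = q' %[modX m] -> p * q = p' * q' %[modX m].
Proof.
move=> /eqmodXP pp' /eqmodXP qq'; apply/eqmodXP => i lt_im.
rewrite !coefM; apply: eq_bigr => j _.
by rewrite pp' ?qq' //; apply: leq_ltn_trans lt_im; rewrite ?leq_subr // -ltnS.
Qed.

Lemma eqmodX_prod m (I : Type) (r : seq I) (P : pred I) (F G : I -> {poly R}) :
  (forall i, P i -> F i = G i %[modX m]) ->
  \prod_(i <- r | P i) F i = \prod_(i <- r | P i) G i %[modX m].
Proof.
move=> FG; apply: (big_ind2 (fun p q => p = q %[modX m])) => //.
exact: eqmodX_mul.
Qed.

Lemma eqmodX_prod1 m (I : Type) (r : seq I) (P : pred I) (F : I -> {poly R}) :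
  (forall i, P i -> F i = 1 %[modX m]) ->
  \prod_(i <- r | P i) F i = 1 %[modX m].
Proof.
by move=> F1; rewrite -[in RHS](@big1_eq _ 1 *%R _ r P); apply: eqmodX_prod.
Qed.

Lemma eqmodX_1subMXn m e p : (m <= e)%N -> 1 - p * 'X^e = 1 %[modX m].
Proof.
move=> le_me; apply/eqmodXP => i lt_im.
by rewrite coefB coefMXn (leq_trans lt_im le_me) subr0.
Qed.

Lemma eqmodX_sumXn_trunc m M M' (c : nat -> R) (w : nat -> nat) :
    (M' <= M)%N ->
    (forall j, (M' < j <= M)%N -> (w j < m)%N -> c j = 0) ->
  \sum_(j < M.+1) c j *: 'X^(w j) = \sum_(j < M'.+1) c j *: 'X^(w j) %[modX m].
Proof.
move=> le_M'M c0; apply/eqmodXP => i lt_im.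
rewrite (big_ord_widen _ (fun j => c j *: 'X^(w j)) (_ : M'.+1 <= M.+1)%N) //.
rewrite [in LHS](bigID (fun j : 'I_M.+1 => (j < M'.+1)%N)) /= coefD.
rewrite [X in _ + X = _]coef_sum [X in _ + X = _]big1 ?addr0 // => j.
rewrite -leqNgt coefZ coefXn => lt_M'j.
case: eqP => [iw|]; last by rewrite mulr0.
by rewrite c0 ?mul0r -?iw // lt_M'j -ltnS ltn_ord.
Qed.

Lemma eqmodX_comp_Xn m e p : (0 < e)%N ->
  \sum_(i < m) p`_i *: 'X^(e * i) = p \Po 'X^e %[modX m].
Proof.
move=> e_gt0; apply/eqmodXP => t; rewrite coef_comp_poly_Xn // coef_sumMXn.
case: dvdnP => [[i ->] lt_tm|e_ndvd_t _]; last first.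
  rewrite big_pred0 // => i; apply/eqP => ti; apply: e_ndvd_t.
  by exists i; rewrite -ti mulnC.
have lt_im : (i < m)%N by apply: leq_ltn_trans lt_tm; rewrite leq_pmulr.
rewrite mulnK // (big_pred1 (Ordinal lt_im)) // => j /=.
by rewrite mulnC eqn_pmul2r.
Qed.

End TruncatedPolynomials.

Section SignedPartitions.

Variables A Q : pred nat.

Definition mult_coef (k j : nat) : int :=
  (((j != 0) ==> ((0 < k)%N && A k)) && Q j)%:R * (-1) ^+ j.

Definition part_factor (M k : nat) : {poly int} :=
  \sum_(j < M.+1) mult_coef k j *: 'X^(k * j).

Definition part_genpoly (M : nat) : {poly int} :=
  \prod_(k < M.+1) part_factor M k.

Lemma coef_part_genpoly N :
  (part_genpoly N)`_N =
  \sum_(m : {ffun 'I_N.+1 -> 'I_N.+1} | is_partA A m && [forall k, Q (m k)])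
    (-1) ^+ num_parts m.
Proof.
rewrite (coef_prod_sumXn (fun k j : 'I_N.+1 => mult_coef k j)
                         (fun k j : 'I_N.+1 => (k * j)%N)).
rewrite big_mkcond [RHS]big_mkcond; apply: eq_bigr => m _ /=.
rewrite big_split /= prodr_bool prodrXr forall_andb /is_partA /num_parts.
by case: eqP; case: [forall k, _]; case: [forall k, _]; rewrite ?mul1r ?mul0r.
Qed.

Lemma part_factor_trunc N M k :
  (N <= M)%N -> part_factor M k = part_factor N k %[modX N.+1].
Proof.
move=> le_NM; apply: eqmodX_sumXn_trunc => // j /andP[lt_Nj _] lt_kj.
case: k lt_kj => [|k] lt_kj.
  by rewrite /mult_coef -lt0n (leq_ltn_trans _ lt_Nj) //= mul0r.
have := leq_ltn_trans (leq_pmull j (ltn0Sn k)) lt_kj.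
by rewrite ltnS leqNgt lt_Nj.
Qed.

Hypothesis Q0 : Q 0.

Lemma mult_coef0 k : mult_coef k 0 = 1.
Proof. by rewrite /mult_coef Q0. Qed.

Lemma part_factor_large N M k : (N < k)%N -> part_factor M k = 1 %[modX N.+1].
Proof.
move=> lt_Nk; apply: etrans (eqmodX_sumXn_trunc (M' := 0) _ _) _ => //.
  move=> j /andP[j_gt0 _]; rewrite ltnS => le_kj_N.
  by move: (leq_trans lt_Nk (leq_pmulr k j_gt0)); rewrite ltnNge le_kj_N.
by rewrite big_ord1 mult_coef0 muln0 scale1r.
Qed.

Lemma part_genpoly_trunc N M :
  (N <= M)%N -> part_genpoly M = part_genpoly N %[modX N.+1].
Proof.
move=> le_NM; rewrite /part_genpoly.
rewrite (bigID (fun k : 'I_M.+1 => (k < N.+1)%N)) /=.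
rewrite -[X in _ = X %[modX _]]mulr1.
rewrite (big_ord_widen _ (part_factor N) (_ : N.+1 <= M.+1)%N) //.
apply: eqmodX_mul; first by apply: eqmodX_prod => k _; apply: part_factor_trunc.
by apply: eqmodX_prod1 => k; rewrite -leqNgt; apply: part_factor_large.
Qed.

Lemma part_factor_forbidden M k : ~~ ((0 < k)%N && A k) -> part_factor M k = 1.
Proof.
move=> k_forbidden; rewrite /part_factor big_ord_recl mult_coef0 muln0 scale1r.
rewrite big1 ?addr0 // => j _.
by rewrite /mult_coef (negbTE k_forbidden) mul0r scale0r.
Qed.

End SignedPartitions.

Lemma pbar_coef A N M : (N <= M)%N -> pbar A N = (part_genpoly A predT M)`_N.
Proof.
move=> le_NM.
rewrite (coef_eqmodX (part_genpoly_trunc _ _ le_NM)) // coef_part_genpoly.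
rewrite /pbar /EA /OA -sumr_sign_card; apply: eq_bigl => m.
by case: (is_partA A m) => //=; apply/esym/forallP.
Qed.

Lemma pbar_alpha_coef A alpha n :
  pbar_alpha A alpha n = (part_genpoly A (leq^~ alpha) n)`_n.
Proof.
rewrite coef_part_genpoly sumr_sign_card.
by congr (_%:Z - _%:Z); apply: eq_card => m; rewrite !inE andbA.
Qed.

Lemma mul_1subr_prod_1addrX2 (R : comPzRingType) (x : R) m :
  (1 - x) * \prod_(j < m) (1 + x ^+ (2 ^ j)%N) = 1 - x ^+ (2 ^ m)%N.
Proof.
elim: m => [|m IHm]; first by rewrite big_ord0 mulr1 expr1.
by rewrite big_ord_recr /= mulrA IHm -subr_sqr expr1n -exprM expnSr.
Qed.

Lemma mul_1addr_sum_oppX (R : pzRingType) (x : R) m :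
  (1 + x) * \sum_(j < m) (- x) ^+ j = 1 - (- x) ^+ m.
Proof.
have -> : 1 + x = - (- x - 1) by rewrite opprB opprK addrC.
by rewrite mulNr -subrX1 opprB.
Qed.

Lemma prod_alt_geom_exp2 n k : (0 < k)%N ->
  \prod_(j < n.+1) \sum_(i < n.+1) (- 'X^(k * 2 ^ j) : {poly int}) ^+ i
    = 1 - 'X^k %[modX n.+1].
Proof.
move=> k_gt0; set G := \prod_(j < n.+1) _.
have tele : (1 - 'X^k : {poly int}) * \prod_(j < n.+1) (1 + 'X^(k * 2 ^ j))
             = 1 %[modX n.+1].
  under eq_bigr do rewrite exprM.
  rewrite mul_1subr_prod_1addrX2 -exprM -[X in 1 - X]mul1r.
  apply: eqmodX_1subMXn; apply: leq_trans (leq_pmull _ k_gt0).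
  exact/ltnW/ltn_expl.
have geom j : (1 + 'X^(k * 2 ^ j) : {poly int})
                 * \sum_(i < n.+1) (- 'X^(k * 2 ^ j)) ^+ i = 1 %[modX n.+1].
  rewrite mul_1addr_sum_oppX exprNn -exprM; apply: eqmodX_1subMXn.
  by rewrite leq_pmull // muln_gt0 k_gt0 expn_gt0.
have := eqmodX_mul (esym tele) (erefl (take_poly n.+1 G)).
rewrite mul1r -mulrA -big_split /= => ->.
rewrite -[X in _ = X %[modX _]]mulr1; apply: eqmodX_mul (erefl _) _.
by apply: eqmodX_prod1 => j _.
Qed.

Lemma part_factor_alt_geom A M k : (0 < k)%N && A k ->
  part_factor A predT M k = \sum_(j < M.+1) (- 'X^k) ^+ j.
Proof.
move=> k_allowed; apply: eq_bigr => j _.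
rewrite /mult_coef k_allowed implybT mul1r -mul_polyC exprM [RHS]exprNn.
by rewrite rmorphXn rmorphN rmorph1.
Qed.

Lemma part_factor_mult_le1 A M k : (0 < k)%N && A k -> (0 < M)%N ->
  part_factor A (leq^~ 1%N) M k = 1 - 'X^k.
Proof.
move=> k_allowed; case: M => [|M] // _.
rewrite /part_factor !big_ord_recl big1 => [|j _]; last first.
  by rewrite /mult_coef /= andbF mul0r scale0r.
rewrite mult_coef0 // /mult_coef /= k_allowed /=.
by rewrite muln0 muln1 scale1r mul1r expr1 scaleN1r addr0.
Qed.

Lemma alt_geom_comp_Xn (R : comNzRingType) M k e :
  (\sum_(j < M) (- 'X^k) ^+ j) \Po 'X^e
    = \sum_(j < M) (- 'X^(k * e)) ^+ j :> {poly R}.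
Proof.
rewrite rmorph_sum; apply: eq_bigr => j _ /=.
by rewrite rmorphXn rmorphN /= comp_Xn_poly -exprM mulnC.
Qed.

Lemma prod_part_factor_dilate A n k : (k <= n)%N ->
  \prod_(j < n.+1) (part_factor A predT n k \Po 'X^(2 ^ j))
    = part_factor A (leq^~ 1%N) n k %[modX n.+1].
Proof.
move=> le_kn; have [k_allowed|k_forbidden] := boolP ((0 < k)%N && A k).
  have k_gt0 : (0 < k)%N by case/andP: k_allowed.
  have n_gt0 : (0 < n)%N := leq_trans k_gt0 le_kn.
  rewrite part_factor_alt_geom // part_factor_mult_le1 //.
  under eq_bigr do rewrite alt_geom_comp_Xn.
  exact: prod_alt_geom_exp2.
by rewrite !part_factor_forbidden // big1 // => j _; rewrite rmorph1.
Qed.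

Lemma prod_dilate_part_genpoly A n :
  \prod_(j < n.+1) \sum_(i < n.+1) (part_genpoly A predT n)`_i *: 'X^(2 ^ j * i)
    = part_genpoly A (leq^~ 1%N) n %[modX n.+1].
Proof.
set G := part_genpoly A predT n.
apply: (@etrans _ _ (take_poly n.+1 (\prod_(j < n.+1) (G \Po 'X^(2 ^ j))))).
  by apply: eqmodX_prod => j _; apply: eqmodX_comp_Xn; rewrite expn_gt0.
under eq_bigr do rewrite rmorph_prod.
rewrite exchange_big; apply: eqmodX_prod => k _.
by apply: prod_part_factor_dilate; rewrite -ltnS.
Qed.

Theorem mainTheorem4 (psi : nat -> nat) (A : pred nat)
  (hpos : forall k, (0 < k)%N -> (0 < psi k)%N)
  (hinj : forall k l, (0 < k)%N -> (0 < l)%N -> psi k = psi l -> k = l)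
  (hA : forall a, A a <-> exists2 k, (0 < k)%N & psi k = a)
  (n : nat) :
  pbar_alpha A 1 n =
  \sum_(N : {ffun 'I_n.+1 -> 'I_n.+1} | (\sum_(i < n.+1) 2 ^ i * N i)%N == n)
     \prod_(j < n.+1) pbar A (N j).
Proof.
(* The hypotheses on psi only make A a set of positive integers, which is
   irrelevant: is_partA already requires every part to be positive. *)
rewrite pbar_alpha_coef -(coef_eqmodX (prod_dilate_part_genpoly A n) (ltnSn n)).
rewrite (coef_prod_sumXn (fun j i : 'I_n.+1 => (part_genpoly A predT n)`_i)
                         (fun j i : 'I_n.+1 => (2 ^ j * i)%N)).
apply: eq_bigr => N _; apply: eq_bigr => j _.
by rewrite (pbar_coef A (_ : N j <= n)%N) // -ltnS.
Qed.
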